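(* Let the standing assumptions (listed in the context) hold. Let $(x_k)$ have a cluster point $x^*$ such that $\mathcal{J}|_{\mathcal{N}}$ is $\kappa$-strongly convex, where $\mathcal{N}\subset\Omega$ is a convex neighborhood of $x^*$. Then 1) $\mathcal{J}(x^* )+\kappa\|x-x^*\|^2\le\mathcal{J}(x)$ for all $x\in\mathcal{N}$; 2) the iterates $(x_k)$ converge r-linearly to $x^*$; 3) the gradients $(\nabla\mathcal{J}(x_k))$ converge r-linearly to zero; 4) the function values $(\mathcal{J}(x_k))$ converge q-linearly to $\mathcal{J}(x^* )$; specifically, if $\bar k$ is such that $x_k\in\mathcal{N}$ for all $k\ge\bar k$, then $\mathcal{J}(x_{k+1})-\mathcal{J}(x^* )\le\left(1-\frac{2\sigma\alpha_k\kappa}{\|B_k\|}\right)[\mathcal{J}(x_k)-\mathcal{J}(x^* )]$ for all $k\ge\bar k$, and the supremum of the term in round brackets is strictly smaller than 1.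
   Context: Let $\mathcal{X}$ be a Hilbert space and $\mathcal{J}:\mathcal{X}\to\mathbb{R}$. Algorithm SLBFGS (structured inverse L-BFGS): inputs $x_0\in\mathcal{X}$, $\epsilon\geq0$, $\ell\in\mathbb{N}_0$, $c_0\geq 0$, $C_0\in[c_0,\infty]$, $c_s,c_1,c_2>0$; let $\tau_0>0$. For $k=0,1,2,\ldots$: let $m=\max\{0,k-\ell\}$; choose a symmetric positive semi-definite bounded linear operator $S_k$; set $B_k^{(0)}=\tau_k I+S_k$; let $B_k$ be obtained from $B_k^{(0)}$ and the currently stored pairs $(s_j,y_j)$, $m\le j\le k-1$, by successive L-BFGS updates $B\mapsto B+\frac{yy^T}{y^Ts}-\frac{Bss^TB}{s^TBs}$; set $d_k=-B_k^{-1}\nabla\mathcal{J}(x_k)$; compute a step length $\alpha_k>0$ by a line search; set $s_k=\alpha_kd_k$, $x_{k+1}=x_k+s_k$, $y_k=\nabla\mathcal{J}(x_{k+1})-\nabla\mathcal{J}(x_k)$; store $(s_k,y_k)$ only if $y_k^Ts_k>c_s\|s_k\|^2$; if $k\ge\ell$ remove $(s_m,y_m)$ from storage; stop with output $x_{k+1}$ if $\|\nabla\mathcal{J}(x_{k+1})\|\le\epsilon$; set $z_k=y_k-S_{k+1}s_k$, $\omega^l_{k+1}=\min\{c_0,c_1\|\nabla\mathcal{J}(x_{k+1})\|^{c_2}\}$, $\omega^u_{k+1}=\max\{C_0,(c_1\|\nabla\mathcal{J}(x_{k+1})\|^{c_2})^{-1}\}$; with $P(t)=\min\{\max\{t,\omega^l_{k+1}\},\omega^u_{k+1}\}$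 and $\rho=z_k^Ts_k$ let $\tau^s=P(\rho/\|s_k\|^2)$, $\tau^g=P(\|z_k\|/\|s_k\|)$, $\tau^z=P(\|z_k\|^2/\rho)$; if $\rho>0$ choose $\tau_{k+1}\in[\tau^s,\tau^z]$, else choose $\tau_{k+1}\in[\tau^s,\tau^g]$. Line searches: Armijo with backtracking means, for fixed $\beta,\sigma\in(0,1)$, $\alpha_k$ is the largest number in $\{1,\beta,\beta^2,\ldots\}$ with $\mathcal{J}(x_{k+1})\le\mathcal{J}(x_k)+\alpha_k\sigma\nabla\mathcal{J}(x_k)^Td_k$; the Wolfe–Powell conditions are this Armijo inequality together with $\nabla\mathcal{J}(x_{k+1})^Td_k\ge\eta\nabla\mathcal{J}(x_k)^Td_k$ for fixed $\eta\in(\sigma,1)$. Let $\Omega=\{x:\mathcal{J}(x)\le\mathcal{J}(x_0)\}$. Standing assumptions: 1) $\mathcal{J}$ is continuously differentiable and bounded below; 2) $\nabla\mathcal{J}$ is Lipschitz continuous on $\Omega$ with constant $L>0$; 3) $(\|S_k\|)$ is bounded; 4) the step sizes consistently satisfy the Armijo condition computed by backtracking, or consistently satisfy the Wolfe–Powell conditions (no uniform continuity assumption on a neighborhood of $\Omega$ is required); 5) $c_0=0$ is only chosen if then $\sup_k\|(B_k^{(0)})^{-1}\|<\infty$; 6) $C_0=\infty$ is only chosen if either the interval $[\tau^s,\tau^z]$ is replaced by $[\tau^s,\tau^g]$, or $\mathcal{J}$ is twice continuously differentiable, $\int_0^1\nabla^2\mathcal{J}(x_k+ts_k)\,dt-S_{k+1}$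 is symmetric positive semi-definite for all $k$ with bounded norms; 7) the algorithm is run with $\epsilon=0$ and generates an infinite sequence $(x_k)$; 8) $(\|B_k\|)$ and $(\|B_k^{-1}\|)$ are bounded. *)

(* A real Hilbert space is modelled as a complete
   normed module X over R : realType together with an inner product ip whose
   induced norm is the norm of X. *)
From HB Require Import structures.
From mathcomp Require Import all_boot all_order all_algebra.
From mathcomp Require Import all_classical all_reals all_analysis.
Set Implicit Arguments. Unset Strict Implicit. Unset Printing Implicit Defensive.
Import Order.TTheory GRing.Theory Num.Theory Num.Def.
Import numFieldNormedType.Exports.
Local Open Scope classical_set_scope.
Local Open Scope ring_scope.

Section Defs.
Variables (R : realType) (X : completeNormedModType R).

Definition inner_product (ip : X -> X -> R) : Prop :=
  [/\ forall u v, ip u v = ip v u,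
      forall a u v w, ip (a *: u + v) w = a * ip u w + ip v w
    & forall u, ip u u = `|u| ^+ 2].

Definition linear_op (A : X -> X) : Prop :=
  forall a u v, A (a *: u + v) = a *: A u + A v.

Definition bounded_linear (A : X -> X) : Prop :=
  linear_op A /\ exists M : R, forall v, `|A v| <= M * `|v|.

Definition opnorm (A : X -> X) : R :=
  sup [set `|A v| | v in [set v : X | `|v| <= 1]].

Definition symmetric_op (ip : X -> X -> R) (A : X -> X) : Prop :=
  forall u v, ip (A u) v = ip u (A v).

Definition psd_op (ip : X -> X -> R) (A : X -> X) : Prop :=
  forall v, 0 <= ip (A v) v.

Definition inverse_ops (A Ainv : X -> X) : Prop :=
  forall v, A (Ainv v) = v /\ Ainv (A v) = v.

(* L-BFGS update  B |-> B + y y^T/(y^T s) - B s s^T B/(s^T B s) *)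
Definition bfgs_update (ip : X -> X -> R) (B : X -> X) (s y : X) : X -> X :=
  fun v => B v + (ip y v / ip y s) *: y - (ip (B s) v / ip s (B s)) *: B s.

(* successive updates of B0 by the pairs j in js (in order), using only the
   pairs that were stored, i.e. those with y_j^T s_j > c_s ||s_j||^2 *)
Definition lbfgs_op (ip : X -> X -> R) (cs : R) (s y : nat -> X)
    (B0 : X -> X) (js : seq nat) : X -> X :=
  foldl (fun B j => if cs * `|s j| ^+ 2 < ip (y j) (s j)
                    then bfgs_update ip B (s j) (y j) else B) B0 js.

(* indices m <= j <= k-1 with m = max(0, k - l) *)
Definition stored_window (l k : nat) : seq nat := iota (k - l) (k - (k - l)).

Definition projP (wl : R) (wu : \bar R) (t : R) : R :=
  fine (mine (Num.max t wl)%:E wu).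

(* kappa-strong convexity of J on the (convex) set N, with the convention
   matching conclusion 1): J - kappa ||.||^2 convex on N *)
Definition strongly_convex_on (J : X -> R) (N : set X) (kappa : R) : Prop :=
  forall u v (l : R), N u -> N v -> 0 <= l <= 1 ->
    J (l *: u + (1 - l) *: v) <=
      l * J u + (1 - l) * J v - kappa * l * (1 - l) * `|u - v| ^+ 2.

Definition convex_set (N : set X) : Prop :=
  forall u v (l : R), N u -> N v -> 0 <= l <= 1 -> N (l *: u + (1 - l) *: v).


Definition armijo (ip : X -> X -> R) (J : X -> R) (g : X -> X) (sigma : R)
    (xk dk : X) (a : R) : Prop :=
  J (xk + a *: dk) <= J xk + a * sigma * ip (g xk) dk.

Definition armijo_backtracking (ip : X -> X -> R) (J : X -> R) (g : X -> X)
    (sigma beta : R) (xk dk : X) (a : R) : Prop :=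
  exists i : nat, a = beta ^+ i /\ armijo ip J g sigma xk dk a /\
    forall j : nat, (j < i)%N -> ~ armijo ip J g sigma xk dk (beta ^+ j).

Definition wolfe_powell (ip : X -> X -> R) (J : X -> R) (g : X -> X)
    (sigma eta : R) (xk dk : X) (a : R) : Prop :=
  armijo ip J g sigma xk dk a /\ eta * ip (g xk) dk <= ip (g (xk + a *: dk)) dk.

(* rule for tau_{k+1}; gnext = grad J(x_{k+1}), z = z_k, s = s_k.
   useg = true is the variant in which [tau^s, tau^z] is replaced by
   [tau^s, tau^g]. *)
Definition tau_rule (ip : X -> X -> R) (c0 : R) (C0 : \bar R) (c1 c2 : R)
    (useg : bool) (gnext z s : X) (tnext : R) : Prop :=
  let wl := Num.min c0 (c1 * `|gnext| `^ c2) in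
  let wu := maxe C0 ((c1 * `|gnext| `^ c2)^-1)%:E in
  let rho := ip z s in
  let ts := projP wl wu (rho / `|s| ^+ 2) in
  let tg := projP wl wu (`|z| / `|s|) in
  let tz := projP wl wu (`|z| ^+ 2 / rho) in
  if (0 < rho) && ~~ useg then ts <= tnext <= tz else ts <= tnext <= tg.

(* second alternative of standing assumption 6): J twice continuously
   differentiable (grad J = g continuously Frechet differentiable with
   derivative H), and int_0^1 Hess J(x_k + t s_k) dt - S_{k+1} symmetric psd
   with bounded norms; the operator integral is taken weakly. *)
Definition hessian_condition (ip : X -> X -> R) (g : X -> X)
    (S : nat -> X -> X) (x s : nat -> X) : Prop :=
  exists H : X -> X -> X,
    (forall u, bounded_linear (H u)) /\
    (forall u, differentiable g u /\ forall h, 'd g u h = H u h) /\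
    (forall u0 (e : R), 0 < e -> exists2 del : R, 0 < del &
        forall u, `|u - u0| < del -> opnorm (fun v => H u v - H u0 v) < e) /\
    exists (A : nat -> X -> X) (M : R), forall k,
      [/\ bounded_linear (A k),
          (forall v w, (ip w (A k v))%:E =
             (\int[lebesgue_measure]_(t in `[0%R, 1%R]%classic)
                 (ip w (H (x k + t *: s k) v))%:E)%E),
          symmetric_op ip (fun v => A k v - S k.+1 v),
          psd_op ip (fun v => A k v - S k.+1 v)
        & opnorm (fun v => A k v - S k.+1 v) <= M].

End Defs.

Definition rlinear (R : realType) (e : nat -> R) : Prop :=
  exists (C q : R), 0 <= q < 1 /\ forall k, e k <= C * q ^+ k.

Definition qlinear (R : realType) (e : nat -> R) : Prop :=
  exists (q : R) (K : nat), 0 <= q < 1 /\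
    forall k, (K <= k)%N -> `|e k.+1| <= q * `|e k|.

From Pilot Require Import Defs.
From HB Require Import structures.
From mathcomp Require Import all_boot all_order all_algebra.
From mathcomp Require Import all_classical all_reals all_analysis.
From mathcomp Require Import ring lra.
Set Implicit Arguments. Unset Strict Implicit. Unset Printing Implicit Defensive.
Import Order.TTheory GRing.Theory Num.Theory Num.Def.
Import numFieldNormedType.Exports.
Local Open Scope classical_set_scope.
Local Open Scope ring_scope.

(* The L-BFGS operators B_k stay symmetric positive semidefinite, so with the
   uniform bounds on B_k and B_k^-1 the directions are gradient related:
   |g_k|^2 <= ||B_k|| (-g_k^T d_k) and |d_k| <= M |g_k|.  Either line search
   then gives sufficient decrease and, near any point of the sublevel set, step
   lengths bounded below, which forces the gradient to vanish at the cluster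
   point x*.  On N strong convexity yields quadratic growth and the
   Polyak-Lojasiewicz inequality; with |x_{k+1} - x*| <= C |x_k - x*| these trap
   the iterates in N, where the Armijo condition contracts the gap
   J(x_k) - J* by the factor 1 - 2 sigma alpha_k kappa / ||B_k||.  Quadratic
   growth and the Lipschitz gradient turn this into r-linear rates for x_k and
   g(x_k). *)

Section RealFacts.
Variable R : realFieldType.

Lemma discriminant_le (a b c : R) : 0 <= c ->
  (forall t, 0 <= a - 2 * t * b + t ^+ 2 * c) -> b ^+ 2 <= a * c.
Proof.
move=> c0 H; have [cgt0|] := ltP 0 c.
  have := H (b / c); set t := b / c => Ht.
  have tc : t * c = b by rewrite /t divfK // gt_eqF.
  rewrite -tc in Ht *; have := mulr_ge0 (ltW cgt0) Ht; nra.
move=> cle0; have c00 : c = 0 by apply/eqP; rewrite eq_le cle0 c0.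
subst c.
rewrite mulr0; have [->|bn0] := eqVneq b 0; first by rewrite expr0n.
have := H ((a + 1) / (2 * b)).
have -> : 2 * ((a + 1) / (2 * b)) * b = a + 1 by field.
nra.
Qed.

Lemma le_of_forall_small_slack (a b c : R) :
  (forall l, 0 < l <= 1 -> a <= b + l * c) -> a <= b.
Proof.
move=> H; rewrite leNgt; apply/negP => ab.
have [cle0|cgt0] := leP c 0.
  by have := H 1; rewrite lexx ltr01 mul1r => /(_ isT); lra.
pose l := Num.min 1 ((a - b) / (2 * c)).
have l0 : 0 < l by rewrite lt_min ltr01 /= divr_gt0 // ?subr_gt0 // mulr_gt0.
have := H l; rewrite l0 ge_min lexx => /(_ isT).
have : l * c <= (a - b) / 2.
  have : l <= (a - b) / (2 * c) by rewrite ge_min lexx orbT.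
  rewrite ler_pdivlMr ?mulr_gt0 // => h.
  rewrite ler_pdivlMr //; nra.
lra.
Qed.

End RealFacts.

Section SymmetricForm.
Variables (R : realFieldType) (X : lmodType R) (f : X -> X -> R).
Hypothesis fC : forall u v, f u v = f v u.
Hypothesis f_linl : forall a u v w, f (a *: u + v) w = a * f u w + f v w.

Lemma bform0l w : f 0 w = 0.
Proof. by have := f_linl 1 0 0 w; rewrite scaler0 add0r mul1r; lra. Qed.

Lemma bformDl u v w : f (u + v) w = f u w + f v w.
Proof. by rewrite -[u]scale1r f_linl mul1r scale1r. Qed.

Lemma bformZl a u w : f (a *: u) w = a * f u w.
Proof. by rewrite -[a *: u]addr0 f_linl bform0l addr0. Qed.

Lemma bformNl u w : f (- u) w = - f u w.
Proof. by rewrite -scaleN1r bformZl mulN1r. Qed.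

Lemma bformBl u v w : f (u - v) w = f u w - f v w.
Proof. by rewrite bformDl bformNl. Qed.

Lemma bformDr u v w : f w (u + v) = f w u + f w v.
Proof. by rewrite fC bformDl !(fC w). Qed.

Lemma bformZr a u w : f w (a *: u) = a * f w u.
Proof. by rewrite fC bformZl (fC w). Qed.

Lemma bformNr u w : f w (- u) = - f w u.
Proof. by rewrite fC bformNl (fC w). Qed.

Lemma bformBr u v w : f w (u - v) = f w u - f w v.
Proof. by rewrite bformDr bformNr. Qed.

Hypothesis f_ge0 : forall u, 0 <= f u u.

Lemma bform_CauchySchwarz u v : f u v ^+ 2 <= f u u * f v v.
Proof.
apply: discriminant_le => [|t]; first exact: f_ge0.
have := f_ge0 (u - t *: v).
rewrite bformBl !bformBr !bformZl !bformZr (fC v u).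
by congr (0 <= _); ring.
Qed.

End SymmetricForm.

Section Operators.
Variables (R : realType) (X : completeNormedModType R).

Lemma linear_op0 (A : X -> X) : linear_op A -> A 0 = 0.
Proof.
move=> hA; have := hA 1 0 0; rewrite scaler0 add0r scale1r => h.
by apply: (addrI (A 0)); rewrite addr0 -h.
Qed.

Lemma linear_opZ (A : X -> X) a v : linear_op A -> A (a *: v) = a *: A v.
Proof. by move=> hA; rewrite -[a *: v]addr0 hA linear_op0 // addr0. Qed.

Lemma opnorm_has_ubound (A : X -> X) : bounded_linear A ->
  has_ubound [set `|A v| | v in [set v : X | `|v| <= 1]].
Proof.
move=> [_ [M hM]]; exists (Num.max M 0) => _ [v /= v1 <-].
apply: le_trans (hM v) _; have : M <= Num.max M 0 by rewrite le_max lexx.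
have : 0 <= Num.max M 0 by rewrite le_max lexx orbT.
have := normr_ge0 v; have [M0|M0] := leP 0 M; nra.
Qed.

Lemma opnorm_ge0 (A : X -> X) : bounded_linear A -> 0 <= opnorm A.
Proof.
move=> hA; apply: (ub_le_sup (opnorm_has_ubound hA)).
by exists 0; rewrite /= ?normr0 // linear_op0 ?normr0 //; case: hA.
Qed.

Lemma opnorm_le (A : X -> X) v : bounded_linear A -> `|A v| <= opnorm A * `|v|.
Proof.
move=> hA; have [->|vn0] := eqVneq v 0.
  by rewrite linear_op0 ?normr0 ?mulr0 //; case: hA.
have nv : 0 < `|v| by rewrite normr_gt0.
have unit_v : `|A (`|v|^-1 *: v)| <= opnorm A.
  apply: (ub_le_sup (opnorm_has_ubound hA)); exists (`|v|^-1 *: v) => //=.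
  by rewrite normrZ ger0_norm ?invr_ge0 ?normr_ge0 // mulVf ?gt_eqF.
move: unit_v; rewrite linear_opZ; last by case: hA.
by rewrite normrZ ger0_norm ?invr_ge0 ?normr_ge0 // mulrC ler_pdivrMr.
Qed.

End Operators.

Section InnerProduct.
Variables (R : realType) (X : completeNormedModType R) (ip : X -> X -> R).
Hypothesis Hip : inner_product ip.

Lemma ipC u v : ip u v = ip v u.
Proof. by case: Hip. Qed.

Lemma ip_linl a u v w : ip (a *: u + v) w = a * ip u w + ip v w.
Proof. by case: Hip. Qed.

Lemma ip_norm u : ip u u = `|u| ^+ 2.
Proof. by case: Hip. Qed.

Lemma ip_ge0 u : 0 <= ip u u.
Proof. by rewrite ip_norm sqr_ge0. Qed.

Lemma ip_CauchySchwarz u v : `|ip u v| <= `|u| * `|v|.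
Proof.
have := bform_CauchySchwarz ipC ip_linl ip_ge0 u v; rewrite !ip_norm.
rewrite -ler_sqrt ?mulr_ge0 ?sqr_ge0 // sqrtr_sqr sqrtrM ?sqr_ge0 //.
by rewrite !sqrtr_sqr !normr_id.
Qed.

Definition sym_psd (B : X -> X) :=
  [/\ linear_op B, symmetric_op ip B & psd_op ip B].

Lemma sqr_norm_le_opnorm_ip (B : X -> X) w : bounded_linear B -> sym_psd B ->
  `|B w| ^+ 2 <= opnorm B * ip (B w) w.
Proof.
move=> hB [hl hs hp].
pose f u v := ip (B u) v.
have fC u v : f u v = f v u by rewrite /f hs ipC.
have f_linl a u v w' : f (a *: u + v) w' = a * f u w' + f v w'.
  by rewrite /f hl ip_linl.
have CS := bform_CauchySchwarz fC f_linl hp w (B w).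
have eBw : f w (B w) = `|B w| ^+ 2 by rewrite /f ip_norm.
have fBw : f (B w) (B w) <= opnorm B * `|B w| ^+ 2.
  rewrite /f; apply: le_trans (ler_norm _) _; apply: le_trans (ip_CauchySchwarz _ _) _.
  have := opnorm_le (B w) hB; have := normr_ge0 (B w); nra.
rewrite eBw in CS; rewrite /f in CS fBw.
have [->|nz] := eqVneq `|B w| 0.
  by rewrite expr0n /= mulr_ge0 ?opnorm_ge0.
have pz : 0 < `|B w| ^+ 2 by rewrite exprn_gt0 // lt_def nz normr_ge0.
rewrite -(ler_pM2l pz); apply: le_trans CS _.
have -> : `|B w| ^+ 2 * (opnorm B * ip (B w) w) =
          ip (B w) w * (opnorm B * `|B w| ^+ 2) by ring.
exact: (ler_wpM2l (hp w) fBw).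
Qed.

Lemma sqr_norm_le_opnorm_ip_inv (B Binv : X -> X) :
  inverse_ops B Binv -> bounded_linear B -> sym_psd B ->
  forall w, `|w| ^+ 2 <= opnorm B * ip w (Binv w).
Proof.
move=> HBinv hB hpsd w; have [Bw _] := HBinv w.
by rewrite -{1 2}Bw; apply: sqr_norm_le_opnorm_ip.
Qed.

Lemma derive_along_line (J : X -> R) (g : X -> X) (u w : X) :
  (forall u, differentiable J u /\ forall h, 'd J u h = ip (g u) h) ->
  forall t : R, is_derive t 1 (fun t : R => J (u + t *: w)) (ip (g (u + t *: w)) w).
Proof.
move=> HJ t.
pose aff := (cst u + ( *:%R ^~ w)) : R -> X.
have da : is_diff t aff (cst 0 + ( *:%R ^~ w)) by exact: is_diffD.
have [dJ dJe] := HJ (aff t).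
have dJ' : is_diff (aff t) J ('d J (aff t)) by apply: DiffDef.
have dphi : is_diff t (J \o aff) ('d J (aff t) \o (cst 0 + ( *:%R ^~ w))).
  exact: is_diff_comp.
apply: DeriveDef; first exact: diff_derivable.
by rewrite deriveE // diff_val /= dJe /= add0r scale1r.
Qed.

Lemma descent_lemma (J : X -> R) (g : X -> X) (L : R) (Om : set X) u w :
  (forall u, differentiable J u /\ forall h, 'd J u h = ip (g u) h) ->
  0 <= L -> (forall a b, Om a -> Om b -> `|g a - g b| <= L * `|a - b|) ->
  (forall t, 0 <= t <= 1 -> Om (u + t *: w)) ->
  `|J (u + w) - J u - ip (g u) w| <= L * `|w| ^+ 2.
Proof.
move=> HJ L0 HL Hseg.
have hd := derive_along_line u w HJ.
have cont : {within `[0, 1], continuous (fun t : R => J (u + t *: w))}.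
  by apply: derivable_within_continuous => t _; case: (hd t).
have [c /[!in_itv] /= /andP[c0 c1] E] := MVT_segment ler01 (fun t _ => hd t) cont.
move: E; rewrite subr0 mulr1 scale1r scale0r addr0 => ->.
rewrite -(bformBl ip_linl); apply: le_trans (ip_CauchySchwarz _ _) _.
have Om_c : Om (u + c *: w) by apply: Hseg; rewrite c0 c1.
have Om_u : Om u by have := Hseg 0; rewrite scale0r addr0 lexx ler01; apply.
have := HL _ _ Om_c Om_u.
rewrite addrAC subrr add0r normrZ ger0_norm // => h.
have h1 := ler_wpM2r (normr_ge0 w) h.
have h2 : 0 <= L * `|w| ^+ 2 * (1 - c) by rewrite mulr_ge0 ?mulr_ge0 ?sqr_ge0 // subr_ge0.
move: h1 h2; rewrite expr2; nra.
Qed.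

End InnerProduct.

Section LBFGS.
Variables (R : realType) (X : completeNormedModType R) (ip : X -> X -> R).
Hypothesis Hip : inner_product ip.

Let ipDl := bformDl (ip_linl Hip).
Let ipZl := bformZl (ip_linl Hip).
Let ipBl := bformBl (ip_linl Hip).
Let ipDr := bformDr (ipC Hip) (ip_linl Hip).
Let ipZr := bformZr (ipC Hip) (ip_linl Hip).

Lemma ip_bfgs_update B s y v w :
  ip (bfgs_update ip B s y v) w =
  ip (B v) w + ip y v / ip y s * ip y w - ip (B s) v / ip s (B s) * ip (B s) w.
Proof. by rewrite /bfgs_update ipBl ipDl !ipZl. Qed.

Lemma bfgs_update_linear B s y : linear_op B -> linear_op (bfgs_update ip B s y).
Proof.
move=> hl a u v; rewrite /bfgs_update hl !ipDr !ipZr !mulrDl !scalerDl.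
rewrite -!mulrA -!(scalerA a) scalerBr scalerDr.
set p := a *: B u; set q := a *: _; set r := a *: _.
by rewrite [p + _ + _]addrACA opprD [LHS]addrACA.
Qed.

(* The update adds the psd rank-one term y y^T / y^T s and subtracts
   B s s^T B / s^T B s, which Cauchy-Schwarz for the form of B dominates. *)
Lemma bfgs_update_sym_psd B s y : sym_psd ip B -> 0 < ip y s ->
  sym_psd ip (bfgs_update ip B s y).
Proof.
move=> [hl hs hp] ys; split; first exact: bfgs_update_linear.
  move=> u v; rewrite ip_bfgs_update (ipC Hip u) ip_bfgs_update.
  rewrite (hs u v) (ipC Hip u) (ipC Hip (B s) v) (ipC Hip y v).
  rewrite (ipC Hip (B s) u) (ipC Hip y u).
  ring.
move=> v; rewrite ip_bfgs_update.
have fC u w : ip (B u) w = ip (B w) u by rewrite hs (ipC Hip).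
have f_linl a u u' w : ip (B (a *: u + u')) w = a * ip (B u) w + ip (B u') w.
  by rewrite hl ip_linl.
have CS := bform_CauchySchwarz fC f_linl hp s v.
have sBs0 : 0 <= ip s (B s) by rewrite (ipC Hip); apply: hp.
have yy0 : 0 <= ip y v / ip y s * ip y v.
  by rewrite mulrAC -expr2 mulr_ge0 ?sqr_ge0 // invr_ge0 ltW.
have BsBs : ip (B s) v / ip s (B s) * ip (B s) v <= ip (B v) v.
  rewrite mulrAC -expr2; have [->|sBs] := eqVneq (ip s (B s)) 0.
    by rewrite invr0 mulr0; apply: hp.
  rewrite ler_pdivrMr ?lt_def ?sBs // mulrC; move: CS.
  by rewrite (ipC Hip s) (ipC Hip (B s) s).
have := hp v; lra.
Qed.

Lemma lbfgs_op_sym_psd cs s y (B0 : X -> X) js : 0 <= cs -> sym_psd ip B0 ->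
  sym_psd ip (lbfgs_op ip cs s y B0 js).
Proof.
move=> cs0; rewrite /lbfgs_op; elim: js B0 => [|j js IH] B0 hB0 //=.
apply: IH; case: ifP => // hc; apply: bfgs_update_sym_psd => //.
by apply: le_lt_trans hc; rewrite mulr_ge0 // sqr_ge0.
Qed.

Lemma shifted_op_sym_psd (t : R) (S0 : X -> X) : 0 <= t ->
  [/\ bounded_linear S0, symmetric_op ip S0 & psd_op ip S0] ->
  sym_psd ip (fun w => t *: w + S0 w).
Proof.
move=> t0 [[hl _] hs hp]; split.
- move=> a u v; rewrite hl scalerDr !scalerA (mulrC t a) -!scalerA scalerDr.
  by rewrite addrACA.
- by move=> u v; rewrite ipDl ipZl hs ipDr ipZr.
- move=> v; rewrite ipDl ipZl ip_norm //.
  by rewrite addr_ge0 ?hp // mulr_ge0 // sqr_ge0.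
Qed.

Lemma projP_ge0 (wl : R) (wu : \bar R) t : 0 <= wl -> (0 <= wu)%E ->
  0 <= projP wl wu t.
Proof.
move=> wl0 wu0; apply: fine_ge0.
by rewrite le_min wu0 andbT lee_fin le_max wl0 orbT.
Qed.

Lemma tau_rule_ge0 c0 C0 c1 c2 useg gn z s tn :
  0 <= c0 -> 0 < c1 -> tau_rule ip c0 C0 c1 c2 useg gn z s tn -> 0 <= tn.
Proof.
move=> c00 c10; rewrite /tau_rule.
set wl := Num.min _ _; set wu := maxe _ _.
have p0 : 0 <= c1 * `|gn| `^ c2 by rewrite mulr_ge0 ?powR_ge0 // ltW.
have wl0 : 0 <= wl by rewrite /wl le_min c00 p0.
have wu0 : (0 <= wu)%E by rewrite /wu le_max lee_fin invr_ge0 p0 orbT.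
have := projP_ge0 (ip z s / `|s| ^+ 2) wl0 wu0.
by case: ifP => _ h /andP[h1 _]; apply: le_trans h h1.
Qed.

End LBFGS.

Section NormBalls.
Variables (R : realType) (X : completeNormedModType R).

Lemma continuous_norm_ball (J : X -> R) x : J @ x --> J x ->
  forall e : R, 0 < e ->
  exists2 r : R, 0 < r & forall u, `|u - x| < r -> `|J u - J x| < e.
Proof.
move=> /cvgrPdist_lt H e e0; have /nbhs_normP [r r0 Hr] := H e e0.
by exists r => // u hu; rewrite distrC; apply: Hr; rewrite /ball_ /= distrC.
Qed.

Lemma cluster_seq_near (x : nat -> X) xs : cluster (x @ \oo) xs ->
  forall (n0 : nat) (r : R), 0 < r -> exists2 k, (n0 <= k)%N & `|x k - xs| < r.
Proof.
move=> Hc n0 r r0.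
have hA : (x @ \oo) [set u | exists2 k, (n0 <= k)%N & u = x k].
  by exists n0 => // k /= hk; exists k.
have [u [[k hk ->] hb]] := Hc _ _ hA (nbhsx_ballx xs r r0).
by exists k => //; move: hb; rewrite -ball_normE /= distrC.
Qed.

End NormBalls.

Section Sequences.
Variable R : realType.

Lemma pos_seq_prefix_lb (a : nat -> R) : (forall k, 0 < a k) ->
  forall n, exists2 c, 0 < c & forall k, (k < n)%N -> c <= a k.
Proof.
move=> H; elim=> [|n [c c0 Hc]]; first by exists 1.
exists (Num.min c (a n)); first by rewrite lt_min c0 H.
move=> k; rewrite ltnS leq_eqVlt => /orP[/eqP->|hk]; first by rewrite ge_min lexx orbT.
by rewrite ge_min Hc.
Qed.

Lemma seq_prefix_geometric_ub (f : nat -> R) (q : R) : 0 < q ->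
  forall n, exists C, forall k, (k < n)%N -> f k <= C * q ^+ k.
Proof.
move=> q0; elim=> [|n [C HC]]; first by exists 0.
exists (Num.max C (f n / q ^+ n)) => k.
have qk j : 0 < q ^+ j by rewrite exprn_gt0.
rewrite ltnS leq_eqVlt => /orP[/eqP->|hk].
  by rewrite -ler_pdivrMr // le_max lexx orbT.
by apply: le_trans (HC _ hk) _; rewrite ler_pM2r // le_max lexx.
Qed.

Lemma rlinear_eventually (f : nat -> R) (C q : R) (K : nat) : 0 <= q < 1 ->
  (forall k, (K <= k)%N -> f k <= C * q ^+ k) -> rlinear f.
Proof.
move=> /andP[q0 q1] H.
pose q' := Num.max q 2^-1.
have q'0 : 0 < q' by rewrite lt_max invr_gt0 ltr0n orbT.
have q'1 : q' < 1 by rewrite gt_max q1 invf_lt1 // ?ltr0n // ltr1n.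
have [Cp HCp] := seq_prefix_geometric_ub f q'0 K.
exists (Num.max (Num.max C 0) Cp), q'; split; first by rewrite ltW // q'1.
move=> k; have qk : 0 < q' ^+ k by rewrite exprn_gt0.
have [hk|hk] := leqP K k; last first.
  by apply: le_trans (HCp _ hk) _; rewrite ler_pM2r // le_max lexx orbT.
apply: le_trans (H _ hk) _.
have C0 : 0 <= Num.max C 0 by rewrite le_max lexx orbT.
have qq : q ^+ k <= q' ^+ k.
  by apply: lerXn2r; rewrite ?nnegrE ?(ltW q'0) ?le_max ?lexx.
apply: le_trans (_ : Num.max C 0 * q' ^+ k <= _); last first.
  by rewrite ler_pM2r // le_max lexx.
apply: le_trans (ler_wpM2l C0 qq).
by apply: ler_wpM2r; rewrite ?exprn_ge0 // le_max lexx.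
Qed.

Lemma qcontraction_geometric (e : nat -> R) (q : R) (K : nat) : 0 < q ->
  (forall k, (K <= k)%N -> e k.+1 <= q * e k) ->
  forall k, (K <= k)%N -> e k <= e K / q ^+ K * q ^+ k.
Proof.
move=> q0 H k /subnKC <-; elim: (k - K)%N => [|n IH].
  by rewrite addn0 divfK // gt_eqF // exprn_gt0.
rewrite addnS exprS mulrCA; apply: le_trans (H _ (leq_addr _ _)) _.
exact: (ler_wpM2l (ltW q0) IH).
Qed.

Lemma sqr_le_geometric (a C q kappa : R) (k : nat) : 0 <= a -> 0 <= C -> 0 <= q ->
  0 < kappa -> kappa * a ^+ 2 <= C * q ^+ k ->
  a <= Num.sqrt (C / kappa) * Num.sqrt q ^+ k.
Proof.
move=> a0 C0 q0 kappa0 H.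
rewrite -(ler_pXn2r (_ : (0 < 2)%N)) ?nnegrE ?mulr_ge0 ?exprn_ge0 ?sqrtr_ge0 //.
rewrite exprMn -exprM mulnC exprM !sqr_sqrtr ?divr_ge0 ?(ltW kappa0) //.
by rewrite mulrAC ler_pdivlMr // mulrC.
Qed.

Lemma nonincreasing_drops_unbounded (a : nat -> R) (P : nat -> Prop) (D b : R) :
  0 < D -> (forall k, a k.+1 <= a k) -> (forall k, b <= a k) ->
  (forall n, exists2 k, (n <= k)%N & P k) -> (forall k, P k -> a k.+1 <= a k - D) ->
  False.
Proof.
move=> D0 adec ab Pinf Pdrop.
have anoninc : nonincreasing_seq a by apply/nonincreasing_seqP.
have drops m : exists k, a k <= a 0%N - m%:R * D.
  elim: m => [|m [k hk]]; first by exists 0%N; rewrite mul0r subr0.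
  have [k' hk' Pk'] := Pinf k; exists k'.+1.
  have := Pdrop _ Pk'; have := anoninc _ _ hk'.
  by rewrite -[m.+1]addn1 natrD mulrDl mul1r; lra.
have ge0 : 0 <= (a 0%N - b) / D by rewrite divr_ge0 ?subr_ge0 ?ab ?ltW.
have hm := archi_boundP ge0; have [k hk] := drops (archi_bound ((a 0%N - b) / D)).
by rewrite ltr_pdivrMr // in hm; have := ab k; lra.
Qed.

End Sequences.

(* After importing MathComp-Analysis, [convex_set] is its notion, stated with
   the convex combination [x <| l |> y] over l : {i01 R}. *)
Lemma convex_set_comb (R : realType) (X : completeNormedModType R) (N : set X) :
  convex_set N -> Defs.convex_set N.
Proof.
move=> H u v l Nu Nv /andP[l0 l1].
by have := H u v (Itv01 l0 l1); rewrite !inE => /(_ Nu Nv).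
Qed.

Lemma convex_comb_shift (R : pzRingType) (X : lmodType R) (a : R) (u v : X) :
  a *: u + (1 - a) *: v = v + a *: (u - v).
Proof. by rewrite scalerBl scale1r scalerBr addrCA addrA. Qed.

Section StrongConvexity.
Variables (R : realType) (X : completeNormedModType R) (ip : X -> X -> R).
Variables (J : X -> R) (g : X -> X) (N : set X) (L kappa : R).
Hypothesis Hip : inner_product ip.
Hypothesis HJ : forall u, differentiable J u /\ forall h, 'd J u h = ip (g u) h.
Hypothesis L_ge0 : 0 <= L.
Hypothesis g_lipschitz : forall u v, N u -> N v -> `|g u - g v| <= L * `|u - v|.
Hypothesis N_convex : Defs.convex_set N.
Hypothesis J_sconvex : strongly_convex_on J N kappa.

(* Divide the strong convexity inequality along [u, v] by l and let l -> 0; the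
   descent lemma bounds the remainder by L l |v - u|^2. *)
Lemma strongly_convex_first_order u v : N u -> N v ->
  J u + ip (g u) (v - u) + kappa * `|v - u| ^+ 2 <= J v.
Proof.
move=> Nu Nv.
apply: (le_of_forall_small_slack (c := (kappa + L) * `|v - u| ^+ 2)).
move=> l /andP[l0 l1]; have l01 : 0 <= l <= 1 by rewrite ltW.
have sc := J_sconvex Nv Nu l01; rewrite convex_comb_shift in sc.
have seg t : 0 <= t <= 1 -> N (u + t *: (l *: (v - u))).
  move=> /andP[t0 t1]; rewrite scalerA -convex_comb_shift.
  by apply: (N_convex Nv Nu); rewrite mulr_ge0 ?mulr_ile1 ?(ltW l0).
have := descent_lemma Hip HJ L_ge0 g_lipschitz seg.
rewrite (bformZr (ipC Hip) (ip_linl Hip)) normrZ gtr0_norm // exprMn.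
move=> /ler_normlP [desc _].
rewrite -(ler_pM2l l0); nra.
Qed.

Lemma strongly_convex_quadratic_growth xs u : N xs -> N u -> g xs = 0 ->
  J xs + kappa * `|u - xs| ^+ 2 <= J u.
Proof.
move=> Nxs Nu gxs; have := strongly_convex_first_order Nxs Nu.
by rewrite gxs (bform0l (ip_linl Hip)) addr0.
Qed.

Hypothesis kappa_gt0 : 0 < kappa.

Lemma strongly_convex_gradient_dominance u v : N u -> N v ->
  4 * kappa * (J u - J v) <= `|g u| ^+ 2.
Proof.
move=> Nu Nv; have fo := strongly_convex_first_order Nu Nv.
have /ler_normlP [CS _] := ip_CauchySchwarz Hip (g u) (v - u).
have key : J u - J v <= `|g u| * `|v - u| - kappa * `|v - u| ^+ 2 by lra.
have := ler_wpM2l (ltW kappa_gt0) key.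
have := sqr_ge0 (`|g u| - 2 * kappa * `|v - u|).
nra.
Qed.

End StrongConvexity.

Section DescentMethod.
Variables (R : realType) (X : completeNormedModType R) (ip : X -> X -> R).
Variables (J : X -> R) (g : X -> X) (x d : nat -> X) (alpha nB : nat -> R).
Variables (sigma L MB : R).
Hypothesis Hip : inner_product ip.
Hypothesis HJ : forall u, differentiable J u /\ forall h, 'd J u h = ip (g u) h.
Hypothesis L_gt0 : 0 < L.
Hypothesis g_lipschitz : forall u v, J u <= J (x 0%N) -> J v <= J (x 0%N) ->
  `|g u - g v| <= L * `|u - v|.
Hypothesis sigma_gt0 : 0 < sigma.
Hypothesis sigma_lt1 : sigma < 1.
Hypothesis line_search :
  (exists beta : R, 0 < beta < 1 /\
     forall k, armijo_backtracking ip J g sigma beta (x k) (d k) (alpha k)) \/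
  (exists eta : R, sigma < eta < 1 /\
     forall k, wolfe_powell ip J g sigma eta (x k) (d k) (alpha k)).
Hypothesis alpha_gt0 : forall k, 0 < alpha k.
Hypothesis x_next : forall k, x k.+1 = x k + alpha k *: d k.
Hypothesis g_neq0 : forall k, g (x k) != 0.
Hypothesis nB_ge0 : forall k, 0 <= nB k.
Hypothesis nB_le : forall k, nB k <= MB.
Hypothesis g_sqr_le : forall k, `|g (x k)| ^+ 2 <= nB k * (- ip (g (x k)) (d k)).
Hypothesis d_le : forall k, `|d k| <= MB * `|g (x k)|.

Let D k := - ip (g (x k)) (d k).
Let Om := [set u | J u <= J (x 0%N)].

Lemma armijo_step k : J (x k.+1) <= J (x k) - alpha k * sigma * D k.
Proof.
rewrite x_next /D mulrN opprK; case: line_search => [[beta [_ H]] | [eta [_ H]]].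
- by have [i [_ [h _]]] := H k.
- by have [h _] := H k.
Qed.

Lemma nB_gt0 k : 0 < nB k.
Proof.
have g2 : 0 < `|g (x k)| ^+ 2 by rewrite exprn_gt0 // normr_gt0.
rewrite lt_def nB_ge0 andbT; apply: contraTneq g2 => nB0.
by rewrite -leNgt; apply: le_trans (g_sqr_le k) _; rewrite nB0 mul0r.
Qed.

Lemma descent_value_gt0 k : 0 < D k.
Proof.
have g2 : 0 < `|g (x k)| ^+ 2 by rewrite exprn_gt0 // normr_gt0.
by rewrite -(pmulr_rgt0 _ (nB_gt0 k)); apply: lt_le_trans (g_sqr_le k).
Qed.

Lemma MB_gt0 : 0 < MB.
Proof. exact: lt_le_trans (nB_gt0 0%N) (nB_le 0%N). Qed.

Lemma J_iter_nonincreasing k : J (x k.+1) <= J (x k).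
Proof.
have := armijo_step k.
have := mulr_gt0 (mulr_gt0 (alpha_gt0 k) sigma_gt0) (descent_value_gt0 k); lra.
Qed.

Lemma J_iter_monotone : nonincreasing_seq (fun k => J (x k)).
Proof. by apply/nonincreasing_seqP => n; exact: J_iter_nonincreasing. Qed.

Lemma J_iter_le0 k : J (x k) <= J (x 0%N).
Proof. exact: J_iter_monotone. Qed.

Lemma g_sqr_le_MB k : `|g (x k)| ^+ 2 <= MB * D k.
Proof.
by apply: le_trans (g_sqr_le k) _; rewrite ler_pM2r ?descent_value_gt0 ?nB_le.
Qed.

Lemma d_sqr_le k : `|d k| ^+ 2 <= MB ^+ 3 * D k.
Proof.
have d2 : `|d k| ^+ 2 <= MB ^+ 2 * `|g (x k)| ^+ 2.
  by rewrite -exprMn; apply: lerXn2r; rewrite ?nnegrE ?mulr_ge0 ?(ltW MB_gt0).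
apply: le_trans d2 _; rewrite [MB ^+ 3]exprSr -mulrA.
by rewrite ler_pM2l ?exprn_gt0 ?MB_gt0 ?g_sqr_le_MB.
Qed.

Lemma sufficient_decrease k :
  J (x k.+1) <= J (x k) - alpha k * sigma * `|g (x k)| ^+ 2 / nB k.
Proof.
apply: le_trans (armijo_step k) _.
rewrite lerD2l lerN2 -mulrA ler_pM2l ?mulr_gt0 //.
by rewrite ler_pdivrMr ?nB_gt0 // mulrC; exact: g_sqr_le.
Qed.

Lemma iter_step k : x k.+1 - x k = alpha k *: d k.
Proof. by rewrite x_next addrAC subrr add0r. Qed.

Lemma wolfe_alpha_lb eta : eta < 1 ->
  (forall k, wolfe_powell ip J g sigma eta (x k) (d k) (alpha k)) ->
  forall k, (1 - eta) / (L * MB ^+ 3) <= alpha k.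
Proof.
move=> eta1 H k; have [_ curv] := H k; rewrite -x_next in curv.
have gdiff : ip (g (x k.+1)) (d k) - ip (g (x k)) (d k) <= L * alpha k * `|d k| ^+ 2.
  rewrite -(bformBl (ip_linl Hip)); apply: le_trans (ler_norm _) _.
  apply: le_trans (ip_CauchySchwarz Hip _ _) _.
  have := g_lipschitz (J_iter_le0 k.+1) (J_iter_le0 k).
  rewrite iter_step normrZ gtr0_norm ?alpha_gt0 // => h.
  by have := ler_wpM2r (normr_ge0 (d k)) h; rewrite [_ ^+ 2]expr2 !mulrA.
have hd := ler_wpM2l (mulr_ge0 (ltW L_gt0) (ltW (alpha_gt0 k))) (d_sqr_le k).
have hD := descent_value_gt0 k; rewrite /D in hd hD.
rewrite ler_pdivrMr ?mulr_gt0 ?exprn_gt0 ?MB_gt0 // -(ler_pM2r hD).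
lra.
Qed.

(* The threshold combines the descent lemma with |d_k|^2 <= MB^3 (-g_k^T d_k). *)
Lemma armijo_short_step k t : 0 <= t <= (1 - sigma) / (L * MB ^+ 3) ->
  (forall tau, 0 <= tau <= 1 -> Om (x k + tau *: (t *: d k))) ->
  armijo ip J g sigma (x k) (d k) t.
Proof.
move=> /andP[t0 tb] seg.
have := descent_lemma Hip HJ (ltW L_gt0) g_lipschitz seg.
rewrite (bformZr (ipC Hip) (ip_linl Hip)) normrZ ger0_norm // exprMn.
move=> /ler_normlP [_ desc].
have hd := ler_wpM2l (mulr_ge0 (ltW L_gt0) (sqr_ge0 t)) (d_sqr_le k).
have hD := descent_value_gt0 k; rewrite /D in hd hD.
have tL : t * (L * MB ^+ 3) <= 1 - sigma.
  by rewrite -ler_pdivlMr ?mulr_gt0 ?exprn_gt0 ?MB_gt0.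
have := ler_wpM2r (mulr_ge0 t0 (ltW hD)) tL.
rewrite /armijo; nra.
Qed.

Lemma g_iter_dist_le u k : Om u -> `| `|g (x k)| - `|g u| | <= L * `|x k - u|.
Proof. by move=> Omu; apply: le_trans (ler_dist_dist _ _) (g_lipschitz (J_iter_le0 k) Omu). Qed.

Lemma backtracking_alpha_lb beta xs r : 0 < beta < 1 ->
  (forall k, armijo_backtracking ip J g sigma beta (x k) (d k) (alpha k)) ->
  0 < r -> (forall u, `|u - xs| < r + r -> Om u) ->
  exists2 c, 0 < c & forall k, `|x k - xs| < r -> c <= alpha k.
Proof.
move=> /andP[beta0 _] H r0 ball.
have Omxs : Om xs by apply: ball; rewrite subrr normr0 addr_gt0.
pose G := `|g xs| + L * r.
have G0 : 0 < G by rewrite ltr_pwDr ?mulr_gt0.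
pose m := Num.min ((1 - sigma) / (L * MB ^+ 3)) (r / (MB * G)).
have m0 : 0 < m by rewrite lt_min !divr_gt0 ?subr_gt0 ?mulr_gt0 ?exprn_gt0 ?MB_gt0.
exists (Num.min 1 (beta * m)); first by rewrite lt_min ltr01 mulr_gt0.
move=> k hk; have [[|j] [-> [_ fails]]] := H k; first by rewrite ge_min lexx.
pose t := beta ^+ j; have t0 : 0 < t by rewrite exprn_gt0.
rewrite exprS ge_min ler_pM2l // orbC; apply/orP; left.
have [short|long] := ltP (t * `|d k|) r.
  rewrite /m ge_min; apply/orP; left; rewrite leNgt; apply/negP => tm.
  apply: (fails j (ltnSn j)); apply: armijo_short_step; first by rewrite (ltW t0) (ltW tm).
  move=> tau /andP[tau0 tau1]; apply: ball.
  rewrite addrAC; apply: le_lt_trans (ler_normD _ _) _.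
  rewrite !normrZ !ger0_norm ?(ltW t0) // ltrD //.
  by apply: le_lt_trans short; rewrite -[leRHS]mul1r ler_wpM2r ?mulr_ge0 ?(ltW t0).
rewrite /m ge_min; apply/orP; right; rewrite ler_pdivrMr ?mulr_gt0 ?MB_gt0 //.
apply: le_trans long _; rewrite ler_pM2l //.
apply: le_trans (d_le k) _; rewrite ler_pM2l ?MB_gt0 //.
have /ler_normlP[_ ?] := g_iter_dist_le k Omxs.
by have := ler_wpM2l (ltW L_gt0) (ltW hk); rewrite /G; lra.
Qed.

Lemma alpha_lb_near xs r : 0 < r -> (forall u, `|u - xs| < r + r -> Om u) ->
  exists2 c, 0 < c & forall k, `|x k - xs| < r -> c <= alpha k.
Proof.
move=> r0 ball; case: line_search => [[beta [beta01 H]] | [eta [/andP[_ eta1] H]]].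
  exact: backtracking_alpha_lb beta01 H r0 ball.
exists ((1 - eta) / (L * MB ^+ 3)); last by move=> k _; exact: wolfe_alpha_lb.
by rewrite divr_gt0 ?subr_gt0 ?mulr_gt0 ?exprn_gt0 ?MB_gt0.
Qed.

(* Near a non-critical cluster point every visit decreases J by a fixed amount,
   and there are infinitely many visits. *)
Lemma grad_cluster_eq0 xs r : (exists b, forall u, b <= J u) ->
  cluster (x @ \oo) xs -> 0 < r -> (forall u, `|u - xs| < r + r -> Om u) ->
  g xs = 0.
Proof.
move=> [b Jb] Hcl r0 ball.
have Omxs : Om xs by apply: ball; rewrite subrr normr0 addr_gt0.
have [c c0 Hc] := alpha_lb_near r0 ball.
apply/eqP; apply: contraT => gxs; pose ga := `|g xs|.
have ga0 : 0 < ga by rewrite normr_gt0.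
pose rho := Num.min r (ga / (2 * L)).
have rho0 : 0 < rho by rewrite lt_min r0 divr_gt0 ?mulr_gt0.
exfalso; apply: (@nonincreasing_drops_unbounded _ (fun k => J (x k))
  (fun k => `|x k - xs| < rho) (c * sigma * (ga / 2) ^+ 2 / MB) b).
- by rewrite divr_gt0 ?mulr_gt0 ?exprn_gt0 ?divr_gt0 ?MB_gt0.
- exact: J_iter_nonincreasing.
- by move=> k; exact: Jb.
- by move=> n; exact: (cluster_seq_near Hcl n rho0).
move=> k hk; apply: le_trans (sufficient_decrease k) _; rewrite lerD2l lerN2.
have gk : ga / 2 <= `|g (x k)|.
  have Ldist : L * `|x k - xs| <= ga / 2.
    rewrite mulrC -ler_pdivlMr // -mulrA -invfM ltW //.
    by apply: lt_le_trans hk _; rewrite ge_min lexx orbT.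
  by have /ler_normlP[? _] := g_iter_dist_le k Omxs; rewrite /ga in Ldist *; lra.
have ck : c <= alpha k by apply: Hc; apply: lt_le_trans hk _; rewrite ge_min lexx.
have g2 : (ga / 2) ^+ 2 <= `|g (x k)| ^+ 2.
  by apply: lerXn2r; rewrite ?nnegrE ?divr_ge0 ?(ltW ga0).
have nBMB : MB^-1 <= (nB k)^-1 by rewrite lef_pV2 ?posrE ?nB_gt0 ?MB_gt0 ?nB_le.
have c0' := ltW c0; have s0 := ltW sigma_gt0; have ga2 := sqr_ge0 (ga / 2).
have MB0 : 0 <= MB^-1 by rewrite invr_ge0 ltW ?MB_gt0.
apply: (ler_pM _ _ _ nBMB) => //; first exact: (mulr_ge0 (mulr_ge0 c0' s0) ga2).
by apply: (ler_pM (mulr_ge0 c0' s0) _ _ g2); rewrite // ler_pM2r.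
Qed.

Lemma J_cluster_le xs : cluster (x @ \oo) xs -> forall k, J xs <= J (x k).
Proof.
move=> Hcl m; rewrite leNgt; apply/negP => hm.
have Jc : J @ xs --> J xs by apply: differentiable_continuous; case: (HJ xs).
have e0 : 0 < J xs - J (x m) by rewrite subr_gt0.
have [del del0 Hdel] := continuous_norm_ball Jc e0.
have [k hk /Hdel /ltr_normlP [Jk _]] := cluster_seq_near Hcl m del0.
by have := J_iter_monotone hk; lra.
Qed.

Section LocalConvergence.
Variables (xs : X) (N : set X) (kappa : R).
Hypothesis J_lb : exists b : R, forall u, b <= J u.
Hypothesis xs_cluster : cluster (x @ \oo) xs.
Hypothesis N_sublevel : N `<=` [set u | J u <= J (x 0%N)].
Hypothesis N_convex : Defs.convex_set N.
Hypothesis N_nbhs : nbhs xs N.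
Hypothesis kappa_gt0 : 0 < kappa.
Hypothesis J_sconvex : strongly_convex_on J N kappa.

Lemma N_ball : exists2 r, 0 < r & forall u, `|u - xs| < r + r -> N u.
Proof.
have /nbhs_normP [r0 r00 inN] := N_nbhs.
exists (r0 / 2); rewrite ?divr_gt0 // -splitr => u hu.
by apply: inN; rewrite /ball_ /= distrC.
Qed.

Lemma xs_in_N : N xs.
Proof. by have [r r0 inN] := N_ball; apply: inN; rewrite subrr normr0 addr_gt0. Qed.

Lemma g_lipschitz_N u v : N u -> N v -> `|g u - g v| <= L * `|u - v|.
Proof. by move=> /N_sublevel Nu /N_sublevel Nv; exact: g_lipschitz. Qed.

Lemma grad_xs_eq0 : g xs = 0.
Proof.
have [r r0 inN] := N_ball.
by apply: (grad_cluster_eq0 J_lb xs_cluster r0) => u /inN /N_sublevel.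
Qed.

Lemma J_xs_le k : J xs <= J (x k).
Proof. exact: J_cluster_le. Qed.

Lemma quadratic_growth u : N u -> J xs + kappa * `|u - xs| ^+ 2 <= J u.
Proof.
move=> Nu; apply: (strongly_convex_quadratic_growth Hip HJ (ltW L_gt0) g_lipschitz_N
  N_convex J_sconvex xs_in_N Nu grad_xs_eq0).
Qed.

Lemma gradient_dominance k : N (x k) ->
  4 * kappa * (J (x k) - J xs) <= `|g (x k)| ^+ 2.
Proof.
move=> Nk; apply: (strongly_convex_gradient_dominance Hip HJ (ltW L_gt0) g_lipschitz_N
  N_convex J_sconvex kappa_gt0 Nk xs_in_N).
Qed.

Lemma alpha_ub k : N (x k) -> 4 * kappa * sigma * alpha k <= MB.
Proof.
move=> Nk; rewrite -(ler_pM2r (descent_value_gt0 k)).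
have dec : alpha k * sigma * D k <= J (x k) - J xs.
  by have := armijo_step k; have := J_xs_le k.+1; lra.
have := ler_wpM2l (mulr_ge0 (ler0n _ 4) (ltW kappa_gt0)) dec.
have := gradient_dominance Nk; have := g_sqr_le_MB k; lra.
Qed.

Lemma iter_dist_expansion :
  exists2 C, 0 < C & forall k, N (x k) -> `|x k.+1 - xs| <= C * `|x k - xs|.
Proof.
pose C2 := MB ^+ 2 * L / (4 * kappa * sigma).
have k4 : 0 < 4 * kappa * sigma by rewrite !mulr_gt0.
have C20 : 0 <= C2 := divr_ge0 (mulr_ge0 (sqr_ge0 MB) (ltW L_gt0)) (ltW k4).
exists (1 + C2); first by rewrite ltr_pwDl.
move=> k Nk.
have gk : `|g (x k)| <= L * `|x k - xs|.
  by have := g_lipschitz_N Nk xs_in_N; rewrite grad_xs_eq0 subr0.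
have sk : `|alpha k *: d k| <= C2 * `|x k - xs|.
  rewrite normrZ gtr0_norm ?alpha_gt0 // /C2 mulrAC ler_pdivlMr //.
  have da : `|d k| <= MB * (L * `|x k - xs|).
    by apply: le_trans (d_le k) _; rewrite ler_pM2l ?MB_gt0.
  have := ler_wpM2r (mulr_ge0 (ltW (alpha_gt0 k)) (ltW k4)) da.
  have := ler_wpM2l (mulr_ge0 (ltW MB_gt0) (mulr_ge0 (ltW L_gt0) (normr_ge0 (x k - xs))))
    (alpha_ub Nk).
  nra.
rewrite x_next addrAC mulrDl mul1r; apply: le_trans (ler_normD _ _) _.
by rewrite lerD2l.
Qed.

(* Once x_k is close enough to xs for quadratic growth to bound |x_k - xs| by
   r / C, the monotonicity of J(x_k) keeps all later iterates in the r-ball. *)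
Lemma iterates_trapped r : 0 < r -> (forall u, `|u - xs| < r -> N u) ->
  exists K, forall k, (K <= k)%N -> `|x k - xs| < r.
Proof.
move=> r0 inN; have [C C0 HC] := iter_dist_expansion.
pose rho := r / C; have rho0 : 0 < rho by rewrite divr_gt0.
have Crho : C * rho = r by rewrite /rho mulrC divfK ?gt_eqF.
have Jc : J @ xs --> J xs by apply: differentiable_continuous; case: (HJ xs).
have [del del0 Hdel] := continuous_norm_ball Jc (mulr_gt0 kappa_gt0 (exprn_gt0 2 rho0)).
have md : 0 < Num.min r del by rewrite lt_min r0 del0.
have [K _ hK] := cluster_seq_near xs_cluster 0%N md.
have inv n : `|x (K + n)%N - xs| < r /\ J (x (K + n)%N) - J xs < kappa * rho ^+ 2.
  elim: n => [|n [hr hJ]].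
    rewrite addn0; split; first by apply: lt_le_trans hK _; rewrite ge_min lexx.
    have /Hdel /ltr_normlP [_ //] : `|x K - xs| < del.
    by apply: lt_le_trans hK _; rewrite ge_min lexx orbT.
  have hrho : `|x (K + n)%N - xs| < rho.
    rewrite -(ltr_pXn2r (_ : (0 < 2)%N)) ?nnegrE ?(ltW rho0) //.
    by rewrite -(ltr_pM2l kappa_gt0); have := quadratic_growth (inN _ hr); lra.
  rewrite addnS; split.
    by apply: le_lt_trans (HC _ (inN _ hr)) _; rewrite -Crho ltr_pM2l.
  by have := J_iter_nonincreasing (K + n); lra.
by exists K => k /subnKC <-; case: (inv (k - K)%N).
Qed.

Lemma alpha_lb : exists2 c, 0 < c & forall k, c <= alpha k.
Proof.
have [r r0 inN] := N_ball.
have [c c0 Hc] := alpha_lb_near r0 (fun u hu => N_sublevel (inN u hu)).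
have [K HK] : exists K, forall k, (K <= k)%N -> `|x k - xs| < r.
  apply: iterates_trapped => // u hu; apply: inN.
  by apply: lt_trans hu _; rewrite ltrDl.
have [cp cp0 Hcp] := pos_seq_prefix_lb alpha_gt0 K.
exists (Num.min c cp) => [|k]; first by rewrite lt_min c0 cp0.
have [hk|hk] := leqP K k.
  by apply: le_trans (Hc _ (HK _ hk)); rewrite ge_min lexx.
by apply: le_trans (Hcp _ hk); rewrite ge_min lexx orbT.
Qed.

Lemma J_contraction k : N (x k) ->
  J (x k.+1) - J xs <= (1 - 2 * sigma * alpha k * kappa / nB k) * (J (x k) - J xs).
Proof.
move=> Nk; have e0 : 0 <= J (x k) - J xs by rewrite subr_ge0 J_xs_le.
have PL := gradient_dominance Nk.
have hD : 2 * kappa * (J (x k) - J xs) / nB k <= D k.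
  rewrite ler_pdivrMr ?nB_gt0 // mulrC.
  by have := g_sqr_le k; have := mulr_ge0 (ltW kappa_gt0) e0; rewrite /D; lra.
have := ler_wpM2l (mulr_ge0 (ltW (alpha_gt0 k)) (ltW sigma_gt0)) hD.
have -> : (1 - 2 * sigma * alpha k * kappa / nB k) * (J (x k) - J xs) =
    J (x k) - J xs - alpha k * sigma * (2 * kappa * (J (x k) - J xs) / nB k).
  by rewrite !mulrA; ring.
by have := armijo_step k; lra.
Qed.

Lemma contraction_factor_ub :
  exists2 q, q < 1 & forall k, 1 - 2 * sigma * alpha k * kappa / nB k <= q.
Proof.
have [c c0 Hc] := alpha_lb.
have c2 : 0 < 2 * sigma * c * kappa by rewrite !mulr_gt0.
exists (1 - 2 * sigma * c * kappa / MB) => [|k].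
  by rewrite ltrBlDr ltrDl divr_gt0 ?MB_gt0.
rewrite lerD2l lerN2.
have nBMB : MB^-1 <= (nB k)^-1 by rewrite lef_pV2 ?posrE ?nB_gt0 ?MB_gt0 ?nB_le.
apply: (ler_pM (ltW c2) _ _ nBMB); first by rewrite invr_ge0 ltW ?MB_gt0.
rewrite ler_pM2r // -!mulrA ler_pM2l ?mulr_gt0 //.
by rewrite ler_pM2l ?Hc.
Qed.

Lemma iterates_eventually_in_N : exists K, forall k, (K <= k)%N -> N (x k).
Proof.
have [r r0 inN] := N_ball.
have [K HK] : exists K, forall k, (K <= k)%N -> `|x k - xs| < r.
  apply: iterates_trapped => // u hu; apply: inN.
  by apply: lt_trans hu _; rewrite ltrDl.
exists K => k hk; apply: inN; apply: lt_trans (HK k hk) _; by rewrite ltrDl.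
Qed.

Lemma J_eventually_qcontraction : exists2 q, 0 < q < 1 &
  exists K, forall k, (K <= k)%N -> J (x k.+1) - J xs <= q * (J (x k) - J xs).
Proof.
have [q q1 Hq] := contraction_factor_ub; have [K HK] := iterates_eventually_in_N.
exists (Num.max q 2^-1); first by rewrite lt_max gt_max invr_gt0 ltr0n orbT q1 invf_lt1 ?ltr1n.
exists K => k hk; apply: le_trans (J_contraction (HK k hk)) _.
apply: ler_wpM2r; first by rewrite subr_ge0 J_xs_le.
by apply: le_trans (Hq k) _; rewrite le_max lexx.
Qed.

Lemma iterates_rlinear_bound : exists C q K, [/\ 0 <= C, 0 <= q < 1 &
  forall k, (K <= k)%N -> `|x k - xs| <= C * q ^+ k].
Proof.
have [q /andP[q0 q1] [K HK]] := J_eventually_qcontraction.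
have [K' HK'] := iterates_eventually_in_N.
pose C := (J (x (maxn K K')) - J xs) / q ^+ maxn K K'.
have C0 : 0 <= C by rewrite divr_ge0 ?subr_ge0 ?J_xs_le ?exprn_ge0 ?ltW.
exists (Num.sqrt (C / kappa)), (Num.sqrt q), (maxn K K'); split.
- exact: sqrtr_ge0.
- by rewrite sqrtr_ge0 /= -sqrtr1 ltr_sqrt.
move=> k; rewrite geq_max => /andP[hK hK'].
apply: (sqr_le_geometric (normr_ge0 _) C0 (ltW q0) kappa_gt0).
have qg := quadratic_growth (HK' k hK').
have := qcontraction_geometric q0 (fun j hj => HK j (leq_trans (leq_maxl K K') hj)).
by move=> /(_ k); rewrite geq_max hK hK' -/C => /(_ isT); lra.
Qed.

Lemma descent_local_linear_convergence :
  [/\ forall u, N u -> J xs + kappa * `|u - xs| ^+ 2 <= J u,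
      rlinear (fun k => `|x k - xs|),
      rlinear (fun k => `|g (x k)|),
      qlinear (fun k => J (x k) - J xs)
    & forall kb : nat, (forall k, (kb <= k)%N -> N (x k)) ->
        (forall k, (kb <= k)%N ->
           J (x k.+1) - J xs <=
             (1 - 2 * sigma * alpha k * kappa / nB k) * (J (x k) - J xs)) /\
        exists2 q : R, q < 1 &
          forall k, (kb <= k)%N -> 1 - 2 * sigma * alpha k * kappa / nB k <= q].
Proof.
have [C [q [K [C0 q01 HC]]]] := iterates_rlinear_bound.
split.
- exact: quadratic_growth.
- exact: rlinear_eventually q01 HC.
- apply: (rlinear_eventually (C := L * C) (K := K) q01) => k hk.
  have := g_lipschitz (J_iter_le0 k) (N_sublevel xs_in_N).
  rewrite grad_xs_eq0 subr0 -mulrA => /le_trans; apply.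
  by rewrite ler_pM2l ?HC.
- have [q' /andP[q'0 q'1] [K' HK']] := J_eventually_qcontraction.
  exists q', K'; rewrite ltW //; split => // k hk.
  by rewrite !ger0_norm ?subr_ge0 ?J_xs_le ?HK'.
- move=> kb Nkb; split=> [k hk|]; first exact: J_contraction (Nkb k hk).
  by have [q' q'1 Hq'] := contraction_factor_ub; exists q' => // k _.
Qed.

End LocalConvergence.

End DescentMethod.

Theorem theorem4p15
  (R : realType) (X : completeNormedModType R) (ip : X -> X -> R)
  (J : X -> R) (g : X -> X)
  (ell : nat) (c0 : R) (C0 : \bar R) (cs c1 c2 sigma L : R) (useg : bool)
  (x d s y : nat -> X) (alpha tau : nat -> R)
  (S B Binv : nat -> X -> X)
  (xs : X) (N : set X) (kappa : R) :
  (* X is a real Hilbert space with inner product ip *)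
  inner_product ip ->
  (* 1) J continuously differentiable with gradient g, bounded below *)
  (forall u, differentiable J u /\ forall h, 'd J u h = ip (g u) h) ->
  continuous g ->
  (exists b : R, forall u, b <= J u) ->
  (* 2) g Lipschitz on Omega *)
  0 < L ->
  (forall u v, J u <= J (x 0%N) -> J v <= J (x 0%N) ->
     `|g u - g v| <= L * `|u - v|) ->
  (* parameters *)
  0 <= c0 -> (c0%:E <= C0)%E -> 0 < cs -> 0 < c1 -> 0 < c2 -> 0 < tau 0%N ->
  (* the operators S_k, 3) bounded norms *)
  (forall k, [/\ bounded_linear (S k), symmetric_op ip (S k) & psd_op ip (S k)]) ->
  (exists M : R, forall k, opnorm (S k) <= M) ->
  (* L-BFGS operator B_k from B_k^(0) = tau_k I + S_k and the stored pairs *)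
  (forall k v, B k v = lbfgs_op ip cs s y (fun w => tau k *: w + S k w)
                          (stored_window ell k) v) ->
  (forall k, inverse_ops (B k) (Binv k)) ->
  (* iteration *)
  (forall k, d k = - Binv k (g (x k))) ->
  (forall k, 0 < alpha k) ->
  (forall k, s k = alpha k *: d k) ->
  (forall k, x k.+1 = x k + s k) ->
  (forall k, y k = g (x k.+1) - g (x k)) ->
  (* 7) eps = 0 and the algorithm never stops *)
  (forall k, g (x k.+1) != 0) ->
  (* choice of tau_{k+1} *)
  (forall k, tau_rule ip c0 C0 c1 c2 useg (g (x k.+1))
               (y k - S k.+1 (s k)) (s k) (tau k.+1)) ->
  (* 4) line search: consistently Armijo-backtracking or Wolfe-Powell *)
  0 < sigma < 1 ->
  ((exists beta : R, 0 < beta < 1 /\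
      forall k, armijo_backtracking ip J g sigma beta (x k) (d k) (alpha k)) \/
   (exists eta : R, sigma < eta < 1 /\
      forall k, wolfe_powell ip J g sigma eta (x k) (d k) (alpha k))) ->
  (* 5) *)
  (c0 = 0 -> exists M : R, forall k, exists B0inv : X -> X,
       inverse_ops (fun w => tau k *: w + S k w) B0inv /\
       bounded_linear B0inv /\ opnorm B0inv <= M) ->
  (* 6) *)
  (C0 = +oo%E -> useg \/ hessian_condition ip g S x s) ->
  (* 8) *)
  (exists M : R, forall k, [/\ bounded_linear (B k), bounded_linear (Binv k),
     opnorm (B k) <= M & opnorm (Binv k) <= M]) ->
  (* cluster point with strongly convex neighbourhood *)
  cluster (x @ \oo) xs ->
  N `<=` [set u | J u <= J (x 0%N)] -> convex_set N -> nbhs xs N ->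
  0 < kappa -> strongly_convex_on J N kappa ->
  [/\ (forall u, N u -> J xs + kappa * `|u - xs| ^+ 2 <= J u),
      rlinear (fun k => `|x k - xs|),
      rlinear (fun k => `|g (x k)|),
      qlinear (fun k => J (x k) - J xs)
    & forall kb : nat, (forall k, (kb <= k)%N -> N (x k)) ->
        (forall k, (kb <= k)%N ->
           J (x k.+1) - J xs <=
             (1 - 2 * sigma * alpha k * kappa / opnorm (B k)) * (J (x k) - J xs)) /\
        exists2 q : R, q < 1 &
          forall k, (kb <= k)%N -> 1 - 2 * sigma * alpha k * kappa / opnorm (B k) <= q].
Proof.
move=> Hip HJ _ J_lb L_gt0 g_lip c0_ge0 _ cs_gt0 c1_gt0 _ tau0_gt0 HS _ HB HBinv Hd
  alpha_gt0 Hs Hx _ g_next_neq0 Htau /andP[sigma_gt0 sigma_lt1] line_search _ _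
  [MB HMB] xs_cluster N_sublevel N_convex N_nbhs kappa_gt0 J_sconvex.
have tau_ge0 k : 0 <= tau k.
  by case: k => [|k]; [exact: ltW | exact: tau_rule_ge0 c0_ge0 c1_gt0 (Htau k)].
have B_psd k : sym_psd ip (B k).
  rewrite (funext (HB k)); apply: lbfgs_op_sym_psd (ltW cs_gt0) _ => //.
  exact: shifted_op_sym_psd.
have x_next k : x k.+1 = x k + alpha k *: d k by rewrite Hx Hs.
have g_neq0 k : g (x k) != 0.
  case: k => [|k]; last exact: g_next_neq0.
  move: (g_next_neq0 0%N); apply: contra => /eqP g0.
  have [_ [Binv_lin _] _ _] := HMB 0%N.
  by rewrite x_next Hd g0 linear_op0 // oppr0 scaler0 addr0 g0.
have nB_ge0 k : 0 <= opnorm (B k) by apply: opnorm_ge0; case: (HMB k).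
have nB_le k : opnorm (B k) <= MB by case: (HMB k).
have g_sqr_le k : `|g (x k)| ^+ 2 <= opnorm (B k) * (- ip (g (x k)) (d k)).
  have [B_bd _ _ _] := HMB k.
  rewrite Hd (bformNr (ipC Hip) (ip_linl Hip)) opprK.
  exact: (sqr_norm_le_opnorm_ip_inv Hip (HBinv k) B_bd (B_psd k)).
have d_le k : `|d k| <= MB * `|g (x k)|.
  have [_ Binv_bd _ Binv_le] := HMB k.
  rewrite Hd normrN; apply: le_trans (opnorm_le _ Binv_bd) _.
  by rewrite ler_wpM2r.
exact: (descent_local_linear_convergence Hip HJ L_gt0 g_lip sigma_gt0 sigma_lt1
  line_search alpha_gt0 x_next g_neq0 nB_ge0 nB_le g_sqr_le d_le J_lb xs_cluster
  N_sublevel (convex_set_comb N_convex) N_nbhs kappa_gt0 J_sconvex).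
Qed.
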